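(* Suppose that a domain $\Omega\subset E_k$ is convex with respect to the set of directions $M_u$ and $f_u(E_k)=\mathbb{C}$ for all $u=1,\ldots,m$. Suppose that $\Phi:\Omega\to\mathbb{A}_n^m$ is monogenic in $\Omega$. If $\zeta_1,\zeta_2\in\Omega$ and $\zeta_2-\zeta_1\in M_u$ for some $u\in\{1,\ldots,m\}$, then $\Phi(\zeta_2)-\Phi(\zeta_1)\in\mathcal{I}_u$.
   Context: Fix integers $1\le m\le n$. $\mathbb{A}_n^m$ is an $n$-dimensional commutative associative algebra with unit over $\mathbb{C}$ having a basis $\{I_r\}_{r=1}^n$ with the multiplication rules: (1) for $r,s\in\{1,\ldots,m\}$: $I_rI_s=0$ if $r\ne s$ and $I_rI_r=I_r$; (2) for $r,s\in\{m+1,\ldots,n\}$: $I_rI_s=\sum_{p=\max\{r,s\}+1}^n\Upsilon^s_{r,p}I_p$ with $\Upsilon^s_{r,p}\in\mathbb{C}$; (3) for each $s\in\{m+1,\ldots,n\}$ there is a unique $u_s\in\{1,\ldots,m\}$ such that for all $r\in\{1,\ldots,m\}$: $I_rI_s=I_s$ if $r=u_s$ and $I_rI_s=0$ otherwise. The unit is $\sum_{u=1}^mI_u$. For $u=1,\ldots,m$, $\mathcal{I}_u=\{\sum_{r\ne u}\lambda_rI_r:\lambda_r\in\mathbb{C}\}$ is a maximal ideal and $f_u:\mathbb{A}_n^m\to\mathbb{C}$ is the linear functional $f_u(\sum_r\lambda_rI_r)=\lambda_u$. Let $2\le k\le 2n$ and let $e_1=1$, $e_j=\sum_{r=1}^n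 a_{jr}I_r$ ($j=2,\ldots,k$) be linearly independent over $\mathbb{R}$; $E_k$ is their real linear span, $\zeta=\sum_j x_je_j$ with $x_j\in\mathbb{R}$. $M_u:=\{\zeta\in E_k: f_u(\zeta)=0\}$. A domain $\Omega\subset E_k$ is convex with respect to the set of directions $M_u$ if for all $\zeta_1,\zeta_2\in\Omega$ with $\zeta_2-\zeta_1\in M_u$ the segment $\{\zeta_1+\alpha(\zeta_2-\zeta_1):\alpha\in[0,1]\}$ lies in $\Omega$. A continuous function $\Phi:\Omega\to\mathbb{A}_n^m$ is monogenic in $\Omega$ if for every $\zeta\in\Omega$ there is $\Phi'(\zeta)\in\mathbb{A}_n^m$ with $\lim_{\varepsilon\to0^+}(\Phi(\zeta+\varepsilon h)-\Phi(\zeta))\varepsilon^{-1}=h\Phi'(\zeta)$ for all $h\in E_k$ (Gateaux derivative). *)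

From mathcomp Require Import all_boot.
From Stdlib Require Import Reals.
Set Implicit Arguments.
Unset Strict Implicit.
Unset Printing Implicit Defensive.

Definition Cx := (R * R)%type.
Definition C0 : Cx := (0%R, 0%R).
Definition C1 : Cx := (1%R, 0%R).
Definition Cadd (a b : Cx) : Cx := (a.1 + b.1, a.2 + b.2)%R.
Definition Copp (a : Cx) : Cx := (- a.1, - a.2)%R.
Definition Cmul (a b : Cx) : Cx := (a.1 * b.1 - a.2 * b.2, a.1 * b.2 + a.2 * b.1)%R.
Definition Cscale (t : R) (a : Cx) : Cx := (t * a.1, t * a.2)%R.
Definition Cnorm (a : Cx) : R := sqrt (a.1 * a.1 + a.2 * a.2)%R.

(* ---------- the algebra A_n^m ----------
   Elements are coordinate vectors w.r.t. the basis I_0,...,I_{n-1}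
   (0-based: paper's I_r is our index r-1; "r in {1..m}" becomes r < m). *)
Definition Alg (n : nat) := 'I_n -> Cx.

Section Algebra.
Variables (n m : nat).
(* us s = u_s (only meaningful for m <= s);  Ups s r p = Upsilon^s_{r,p} *)
Variables (us : 'I_n -> 'I_n) (Ups : 'I_n -> 'I_n -> 'I_n -> Cx).

(* structure constants: I_r I_s = sum_p sc r s p I_p *)
Definition sc (r s p : 'I_n) : Cx :=
  if (r < m) && (s < m) then (if (r == s) && (p == r) then C1 else C0)
  else if (m <= r) && (m <= s) then
         (if maxn r s < p then Ups s r p else C0)
  else if r < m then (if (r == us s) && (p == s) then C1 else C0)
  else (if (s == us r) && (p == r) then C1 else C0).

Definition Aadd (a b : Alg n) : Alg n := fun r => Cadd (a r) (b r).
Definition Asub (a b : Alg n) : Alg n := fun r => Cadd (a r) (Copp (b r)).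
Definition Ascale (t : R) (a : Alg n) : Alg n := fun r => Cscale t (a r).
Definition Amul (a b : Alg n) : Alg n := fun p =>
  \big[Cadd/C0]_(r < n) \big[Cadd/C0]_(s < n) Cmul (Cmul (a r) (b s)) (sc r s p).
Definition Aone : Alg n := fun r => if r < m then C1 else C0.
Definition Anorm (a : Alg n) : R := \big[Rplus/0%R]_(r < n) Cnorm (a r).
Definition f_ (v : 'I_n) (a : Alg n) : Cx := a v.
Definition in_ideal (v : 'I_n) (a : Alg n) : Prop := a v = C0.

Definition is_comm_assoc : Prop :=
  (forall a b p, Amul a b p = Amul b a p) /\
  (forall a b c p, Amul (Amul a b) c p = Amul a (Amul b c) p).

Definition u_ok : Prop := forall s : 'I_n, m <= s -> us s < m.

Variables (k : nat) (e : 'I_k -> Alg n).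

Definition zeta (x : 'I_k -> R) : Alg n :=
  fun r => \big[Cadd/C0]_(j < k) Cscale (x j) (e j r).

Definition inEk (z : Alg n) : Prop := exists x, forall r, z r = zeta x r.

Definition Ek_basis_ok : Prop :=
  (forall j : 'I_k, nat_of_ord j = 0 -> forall r, e j r = Aone r) /\
  (forall x : 'I_k -> R, (forall r, zeta x r = C0) -> forall j, x j = 0%R).

Definition inM (v : 'I_n) (z : Alg n) : Prop := inEk z /\ f_ v z = C0.

Definition open_in_Ek (Om : Alg n -> Prop) : Prop :=
  forall z, Om z -> exists d, (0 < d)%R /\
    forall w, inEk w -> (Anorm (Asub w z) < d)%R -> Om w.

Definition rel_open (Om S : Alg n -> Prop) : Prop :=
  forall z, Om z -> S z -> exists d, (0 < d)%R /\
    forall w, Om w -> (Anorm (Asub w z) < d)%R -> S w.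

Definition connected (Om : Alg n -> Prop) : Prop :=
  ~ exists U V : Alg n -> Prop,
      rel_open Om U /\ rel_open Om V /\
      (forall z, Om z -> U z \/ V z) /\
      (forall z, Om z -> U z -> V z -> False) /\
      (exists z, Om z /\ U z) /\ (exists z, Om z /\ V z).

Definition domain (Om : Alg n -> Prop) : Prop :=
  (forall z, Om z -> inEk z) /\ (exists z, Om z) /\ open_in_Ek Om /\ connected Om.

Definition convex_dir (Om : Alg n -> Prop) (v : 'I_n) : Prop :=
  forall z1 z2, Om z1 -> Om z2 -> inM v (Asub z2 z1) ->
    forall al, (0 <= al <= 1)%R -> Om (Aadd z1 (Ascale al (Asub z2 z1))).

Definition continuous_on (Om : Alg n -> Prop) (Phi : Alg n -> Alg n) : Prop :=
  forall z, Om z -> forall eps, (0 < eps)%R -> exists d, (0 < d)%R /\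
    forall w, Om w -> (Anorm (Asub w z) < d)%R -> (Anorm (Asub (Phi w) (Phi z)) < eps)%R.

Definition monogenic (Om : Alg n -> Prop) (Phi : Alg n -> Alg n) : Prop :=
  continuous_on Om Phi /\
  forall z, Om z -> exists D : Alg n, forall h, inEk h ->
    forall eps, (0 < eps)%R -> exists d, (0 < d)%R /\
      forall t, (0 < t < d)%R ->
        (Anorm (Asub (Ascale (/ t) (Asub (Phi (Aadd z (Ascale t h))) (Phi z)))
                     (Amul h D)) < eps)%R.
End Algebra.

(* Along the segment z(a) = z1 + a h, h = z2 - z1, the I_v-coordinate of
   Phi(z(a)) is continuous in a and has right derivative equal to the
   I_v-coordinate of h Phi'(z(a)).  For v < m the basis element I_v is an
   idempotent, so the I_v-coordinate of a product ab only involves a_v; as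
   h lies in the ideal I_v, that derivative vanishes.  A continuous function
   on [0, 1] with vanishing right derivative is constant (real induction). *)
From HB Require Import structures.
From mathcomp Require Import all_boot.
From Stdlib Require Import Reals Lra Classical FunctionalExtensionality.

Set Implicit Arguments.
Unset Strict Implicit.
Unset Printing Implicit Defensive.

HB.instance Definition _ :=
  Monoid.isComLaw.Build R 0%R Rplus
    (fun x y z => esym (Rplus_assoc x y z)) Rplus_comm Rplus_0_l.

Section RightDerivative.
Local Open Scope R_scope.

Lemma real_induction (Q : R -> Prop) :
  Q 0 ->
  (forall s, 0 < s <= 1 -> (forall y, 0 <= y < s -> Q y) -> Q s) ->
  (forall s, 0 <= s < 1 -> (forall y, 0 <= y <= s -> Q y) ->
     exists d, 0 < d /\ forall y, s < y < s + d -> Q y) ->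
  forall y, 0 <= y <= 1 -> Q y.
Proof.
move=> Q0 Q_closed Q_step.
pose E x := 0 <= x <= 1 /\ forall y, 0 <= y <= x -> Q y.
have E0 : E 0 by split=> [|y Hy]; [lra | have -> : y = 0 by lra; exact: Q0].
have E_bound : bound E by exists 1; move=> x [[_ ?] _].
have [s [s_ub s_lub]] := completeness E E_bound (ex_intro _ 0 E0).
have s_ge0 : 0 <= s by apply: s_ub.
have s_le1 : s <= 1 by apply: s_lub => x [[_ ?] _].
have Q_below : forall y, 0 <= y < s -> Q y.
  move=> y Hy; case: (classic (Q y)) => // nQy.
  suff : s <= y by lra.
  apply: s_lub => x [_ Ex]; apply: Rnot_lt_le => yx; apply/nQy/Ex; lra.
have Es : E s.
  split=> [|y Hy]; first lra.
  have [ys|->] := Rle_lt_or_eq_dec _ _ (proj2 Hy); first by apply: Q_below; lra.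
  have [->|s_neq0] := Req_dec s 0; first exact: Q0.
  by apply: Q_closed => //; lra.
have [s_lt1|s_eq1] := Rle_lt_or_eq_dec _ _ s_le1; last first.
  by move=> y Hy; apply: (proj2 Es); lra.
have [d [d_pos Qd]] := Q_step s (conj s_ge0 s_lt1) (proj2 Es).
have t_le := Rmin_l (d / 2) (1 - s); have t_le' := Rmin_r (d / 2) (1 - s).
have t_pos : 0 < Rmin (d / 2) (1 - s) by apply: Rmin_pos; lra.
suff : s + Rmin (d / 2) (1 - s) <= s by lra.
apply: s_ub; split=> [|y Hy]; first lra.
have [ys|sy] := Rle_dec y s; first by apply: (proj2 Es); lra.
by apply: Qd; lra.
Qed.

Lemma eq_of_right_derivative0 (f : R -> R) :
  (forall a, 0 <= a <= 1 -> forall eps, 0 < eps -> exists d, 0 < d /\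
     forall b, 0 <= b <= 1 -> Rabs (b - a) < d -> Rabs (f b - f a) < eps) ->
  (forall a, 0 <= a < 1 -> forall eps, 0 < eps -> exists d, 0 < d /\
     forall t, 0 < t < d -> Rabs (f (a + t) - f a) < eps * t) ->
  f 1 = f 0.
Proof.
move=> f_cont f_rderiv.
have slope_le : forall eps, 0 < eps ->
    forall y, 0 <= y <= 1 -> Rabs (f y - f 0) <= eps * y.
  move=> eps eps_pos; apply: real_induction.
  - by rewrite Rminus_diag Rabs_R0; lra.
  - move=> s Hs Q_below; apply: Rnot_lt_le => Hgt.
    have [|d [d_pos Hd]] :=
      f_cont s (ltac:(lra)) (Rabs (f s - f 0) - eps * s); first lra.
    have m_le := Rmin_l d s; have m_le' := Rmin_r d s.
    have m_pos : 0 < Rmin d s by apply: Rmin_pos; lra.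
    pose y := s - Rmin d s / 2.
    have Qy := Q_below y (ltac:(rewrite /y; lra)).
    have fy_near := Hd y (ltac:(rewrite /y; lra)) (ltac:(rewrite /y Rabs_left; lra)).
    rewrite Rabs_minus_sym in fy_near.
    have := R_dist_tri (f s) (f 0) (f y); rewrite /R_dist.
    have : eps * y <= eps * s by apply: Rmult_le_compat_l; rewrite /y; lra.
    lra.
  - move=> s Hs Qs; have [d [d_pos Hd]] := f_rderiv s Hs eps eps_pos.
    exists d; split=> // y Hy.
    have := Hd (y - s) (ltac:(lra)); rewrite Rplus_minus.
    have := Qs s (ltac:(lra)); have := R_dist_tri (f y) (f 0) (f s).
    rewrite /R_dist; lra.
apply: Rminus_diag_uniq; case: (Req_dec (f 1 - f 0) 0) => // neq.
have dist_pos := Rabs_pos_lt _ neq.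
have := slope_le (Rabs (f 1 - f 0) / 2) (ltac:(lra)) 1 (ltac:(lra)); lra.
Qed.

End RightDerivative.

Section Norms.
Local Open Scope R_scope.
Variable n : nat.
Implicit Types a b : Alg n.

Lemma Cnorm_ge0 (a : Cx) : 0 <= Cnorm a.
Proof. exact: sqrt_pos. Qed.

Lemma Rabs_fst_le_Cnorm (a : Cx) : Rabs a.1 <= Cnorm a.
Proof.
rewrite /Cnorm -sqrt_Rsqr_abs; apply: sqrt_le_1_alt; rewrite /Rsqr.
have := Rle_0_sqr a.2; rewrite /Rsqr; lra.
Qed.

Lemma Rabs_snd_le_Cnorm (a : Cx) : Rabs a.2 <= Cnorm a.
Proof.
rewrite /Cnorm -sqrt_Rsqr_abs; apply: sqrt_le_1_alt; rewrite /Rsqr.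
have := Rle_0_sqr a.1; rewrite /Rsqr; lra.
Qed.

Lemma Cnorm_scale (t : R) (a : Cx) : Cnorm (Cscale t a) = Rabs t * Cnorm a.
Proof.
rewrite /Cnorm /Cscale /= -sqrt_Rsqr_abs -sqrt_mult_alt; last exact: Rle_0_sqr.
by congr sqrt; rewrite /Rsqr; ring.
Qed.

Lemma Anorm_ge0 a : 0 <= Anorm a.
Proof.
apply: (big_rec (fun x => 0 <= x)) => [|i x _ x_ge0]; first lra.
by have := Cnorm_ge0 (a i); lra.
Qed.

Lemma Cnorm_le_Anorm a (v : 'I_n) : Cnorm (a v) <= Anorm a.
Proof.
rewrite /Anorm (bigD1 v) //=.
have rest_ge0 : 0 <= \big[Rplus/0]_(i < n | i != v) Cnorm (a i).
  apply: (big_rec (fun x => 0 <= x)) => [|i x _ x_ge0]; first lra.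
  by have := Cnorm_ge0 (a i); lra.
rewrite -{1}(Rplus_0_r (Cnorm (a v))); exact: Rplus_le_compat_l.
Qed.

Lemma Anorm_scale a b (t : R) :
  (forall r, a r = Cscale t (b r)) -> Anorm a = Rabs t * Anorm b.
Proof.
move=> a_eq; apply: (big_rec2 (fun x y => x = Rabs t * y)) => [|i x y _ ->].
  by rewrite Rmult_0_r.
by rewrite a_eq Cnorm_scale; ring.
Qed.

End Norms.

Section IdempotentIdeal.
Variables (n m : nat) (us : 'I_n -> 'I_n) (Ups : 'I_n -> 'I_n -> 'I_n -> Cx).

Lemma sc_idem_coord_eq0 (r s v : 'I_n) : v < m -> r != v -> sc m us Ups r s v = C0.
Proof.
move=> v_lt r_neq; have v_neq : (v == r) = false by rewrite eq_sym; apply/negbTE.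
rewrite /sc v_neq !andbF /=.
case: ifP => // r_or_s_ge.
case: ifP => [/andP[m_le_r _]|_].
  suff -> : (maxn r s < v) = false by [].
  apply/negbTE; rewrite -leqNgt (leq_trans _ (leq_maxl r s)) //.
  exact: leq_trans (ltnW v_lt) m_le_r.
case: ifP => // r_lt.
suff -> : (v == s) = false by rewrite andbF.
by apply/negbTE/eqP => v_eq_s; move: r_or_s_ge; rewrite r_lt -v_eq_s v_lt.
Qed.

Lemma in_ideal_Amull (v : 'I_n) (h D : Alg n) :
  v < m -> in_ideal v h -> in_ideal v (Amul m us Ups h D).
Proof.
move=> v_lt h_v; rewrite /in_ideal /Amul.
have C0_add : Cadd C0 C0 = C0 by rewrite /Cadd /C0 /= Rplus_0_r.
apply: (big_rec (fun x => x = C0)) => // r x _ ->.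
rewrite -[RHS]C0_add; congr Cadd.
apply: (big_rec (fun x => x = C0)) => // s y _ ->.
rewrite -[RHS]C0_add; congr Cadd.
have [->|r_neq] := eqVneq r v.
  by rewrite h_v /Cmul /C0 /=; congr pair; ring.
by rewrite sc_idem_coord_eq0 // /Cmul /C0 /=; congr pair; ring.
Qed.

End IdempotentIdeal.

Definition seg (n : nat) (z h : Alg n) (a : R) : Alg n := Aadd z (Ascale a h).

Section Segment.
Local Open Scope R_scope.
Variables (n : nat) (z h : Alg n).

Lemma seg0 : seg z h 0 = z.
Proof.
apply: functional_extensionality => r; rewrite /seg /Aadd /Ascale /Cadd /Cscale /=.
by case: (z r) => x y /=; congr pair; ring.
Qed.

Lemma seg1_sub (w : Alg n) : seg z (Asub w z) 1 = w.
Proof.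
apply: functional_extensionality => r.
rewrite /seg /Aadd /Ascale /Asub /Cadd /Cscale /Copp /=.
by case: (z r) => x y; case: (w r) => x' y' /=; congr pair; ring.
Qed.

Lemma seg_shift (a t : R) : Aadd (seg z h a) (Ascale t h) = seg z h (a + t).
Proof.
apply: functional_extensionality => r; rewrite /seg /Aadd /Ascale /Cadd /Cscale /=.
by case: (z r) => x y; case: (h r) => x' y' /=; congr pair; ring.
Qed.

Lemma Anorm_seg_sub (a b : R) :
  Anorm (Asub (seg z h b) (seg z h a)) = Rabs (b - a) * Anorm h.
Proof.
apply: Anorm_scale => r; rewrite /seg /Aadd /Asub /Ascale /Cadd /Cscale /Copp /=.
by case: (z r) => x y; case: (h r) => x' y' /=; congr pair; ring.
Qed.

End Segment.

Section MonogenicOnSegment.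
Local Open Scope R_scope.
Variables (n m : nat) (us : 'I_n -> 'I_n) (Ups : 'I_n -> 'I_n -> 'I_n -> Cx).
Variables (k : nat) (e : 'I_k -> Alg n) (Om : Alg n -> Prop) (Phi : Alg n -> Alg n).
Hypothesis Phi_monogenic : monogenic m us Ups e Om Phi.
Variables (z h : Alg n).
Hypothesis h_Ek : inEk e h.
Hypothesis seg_in : forall a, 0 <= a <= 1 -> Om (seg z h a).
Variable phi : Alg n -> R.
Hypothesis phi_le : forall a, Rabs (phi a) <= Anorm a.
Hypothesis phiB : forall a b, phi (Asub a b) = phi a - phi b.
Hypothesis phiZ : forall t a, phi (Ascale t a) = t * phi a.
Hypothesis phi_Amul : forall D, phi (Amul m us Ups h D) = 0.

Lemma phi_Phi_seg_continuous a : 0 <= a <= 1 ->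
  forall eps, 0 < eps -> exists d, 0 < d /\ forall b, 0 <= b <= 1 ->
    Rabs (b - a) < d -> Rabs (phi (Phi (seg z h b)) - phi (Phi (seg z h a))) < eps.
Proof.
move=> a01 eps eps_pos.
have [d [d_pos Phi_near]] := proj1 Phi_monogenic _ (seg_in a01) eps eps_pos.
have h_ge0 := Anorm_ge0 h.
exists (d / (Anorm h + 1)); split=> [|b b01 ba_lt]; first by apply: Rdiv_lt_0_compat; lra.
have seg_near : Anorm (Asub (seg z h b) (seg z h a)) < d.
  rewrite Anorm_seg_sub.
  have := Rmult_lt_compat_r (Anorm h + 1) _ _ (ltac:(lra)) ba_lt.
  rewrite /Rdiv Rmult_assoc Rinv_l; last lra.
  by have := Rabs_pos (b - a); nra.
rewrite -phiB; apply: Rle_lt_trans (phi_le _) _.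
exact: Phi_near (seg_in b01) seg_near.
Qed.

Lemma phi_Phi_seg_right_derivative0 a : 0 <= a < 1 ->
  forall eps, 0 < eps -> exists d, 0 < d /\ forall t, 0 < t < d ->
    Rabs (phi (Phi (seg z h (a + t))) - phi (Phi (seg z h a))) < eps * t.
Proof.
move=> a01 eps eps_pos.
have [D Phi_diff] := proj2 Phi_monogenic _ (seg_in (ltac:(lra) : 0 <= a <= 1)).
have [d [d_pos quotient_near]] := Phi_diff h h_Ek eps eps_pos.
exists d; split=> // t t_range.
have := Rle_lt_trans _ _ _ (phi_le _) (quotient_near t t_range).
rewrite seg_shift phiB phiZ phiB phi_Amul Rminus_0_r Rabs_mult Rabs_inv.
rewrite (Rabs_pos_eq t); last lra.
move=> quotient_lt.
have -> : Rabs (phi (Phi (seg z h (a + t))) - phi (Phi (seg z h a)))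
  = t * (/ t * Rabs (phi (Phi (seg z h (a + t))) - phi (Phi (seg z h a)))).
  by field; lra.
by rewrite (Rmult_comm eps t); apply: Rmult_lt_compat_l; lra.
Qed.

Lemma phi_Phi_seg_const : phi (Phi (seg z h 1)) = phi (Phi (seg z h 0)).
Proof.
exact: (eq_of_right_derivative0 phi_Phi_seg_continuous phi_Phi_seg_right_derivative0).
Qed.

End MonogenicOnSegment.

Theorem lemma2
  (n m : nat) (Hm : 1 <= m) (Hmn : m <= n)
  (us : 'I_n -> 'I_n) (Ups : 'I_n -> 'I_n -> 'I_n -> Cx)
  (Hus : u_ok m us) (Halg : is_comm_assoc m us Ups)
  (k : nat) (Hk : 2 <= k) (Hk2 : k <= 2 * n)
  (e : 'I_k -> Alg n) (He : Ek_basis_ok m e)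
  (Om : Alg n -> Prop) (HOm : domain e Om)
  (Hconv : forall v : 'I_n, v < m -> convex_dir e Om v)
  (Hsurj : forall v : 'I_n, v < m -> forall c : Cx, exists z, inEk e z /\ f_ v z = c)
  (Phi : Alg n -> Alg n) (HPhi : monogenic m us Ups e Om Phi) :
  forall (z1 z2 : Alg n) (v : 'I_n), v < m ->
    Om z1 -> Om z2 -> inM e v (Asub z2 z1) ->
    in_ideal v (Asub (Phi z2) (Phi z1)).
Proof.
move=> z1 z2 v v_lt Om_z1 Om_z2 [h_Ek h_v].
have seg_in := Hconv v v_lt z1 z2 Om_z1 Om_z2 (conj h_Ek h_v).
have coord_const (pr : Cx -> R) :
    (forall x, Rabs (pr x) <= Cnorm x)%R -> pr C0 = 0%R ->
    (forall x y, pr (Cadd x (Copp y)) = pr x - pr y)%R ->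
    (forall t x, pr (Cscale t x) = t * pr x)%R ->
    pr (Phi z2 v) = pr (Phi z1 v).
  move=> pr_le pr0 prB prZ.
  have pr_Amul D : pr (Amul m us Ups (Asub z2 z1) D v) = 0%R.
    by rewrite (in_ideal_Amull _ _ _ v_lt h_v).
  have := phi_Phi_seg_const HPhi h_Ek seg_in (phi := fun a => pr (a v))
    (fun a => Rle_trans _ _ _ (pr_le _) (Cnorm_le_Anorm a v))
    (fun a b => prB _ _) (fun t a => prZ _ _) pr_Amul.
  by rewrite seg1_sub seg0.
have fst_eq := coord_const fst Rabs_fst_le_Cnorm erefl (fun _ _ => erefl) (fun _ _ => erefl).
have snd_eq := coord_const snd Rabs_snd_le_Cnorm erefl (fun _ _ => erefl) (fun _ _ => erefl).
rewrite /in_ideal /Asub /Cadd /Copp /C0 /= fst_eq snd_eq.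
by congr pair; ring.
Qed.
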